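(* Consider the mechanism \textbf{InpPS} below with privacy parameter $\epsilon>0$ applied to $N$ users with $d$ binary attributes (with $N$ at least proportional, up to logarithmic factors, to $2^d$). Then \textbf{InpPS} satisfies $\epsilon$-local differential privacy, and with constant probability, for a target $k$-way marginal $\beta$, \[ \|\mathcal{C}^\beta(t)-\mathcal{C}^\beta(t^* )\|_1=\tilde{O}\Big(\frac{2^{d+k/2}}{\epsilon\sqrt{N}}\Big). \]
   Context: Setting: there are $N$ users; user $i$ holds $j_i\in\{0,1\}^d$, represented as the indicator vector $t_i\in\{0,1\}^{2^d}$ (indexed by $\{0,1\}^d$) with $t_i[j_i]=1$ and all other entries $0$. The population distribution is $t=\frac1N\sum_{i=1}^N t_i$. For $\beta\in\{0,1\}^d$ with $k$ ones (a $k$-way marginal) and $\gamma\in\{0,1\}^d$ with $\gamma\wedge\beta=\gamma$ (bitwise AND), the marginal operator is $\mathcal{C}^\beta(v)[\gamma]=\sum_{\eta:\ \eta\wedge\beta=\gamma} v[\eta]$ for $v\in\mathbb{R}^{2^d}$; $\|\cdot\|_1$ sums absolute values over the $2^k$ such $\gamma$. Local differential privacy: a randomized mechanism $F$ on a single user's input is $\epsilon$-LDP if for all inputs $t_i,t_i'$ and every output $R$, $\Pr[F(t_i)=R]\le e^{\epsilon}\Pr[F(t_i')=R]$. \textbf{InpPS} (preferential sampling on the input): let $m=2^d$, $D=m-1$, $p_s=(1+(m-1)e^{-\epsilon})^{-1}$. User $i$ reports an index $\ell_i\in\{0,1\}^d$, equal to $j_i$ with probability $p_s$, and otherwise uniformly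 random among the $m-1$ indices different from $j_i$. The aggregator lets $F_j$ be the fraction of users reporting $j$, sets $t^*[j]=\frac{DF_j+p_s-1}{Dp_s+p_s-1}$, and answers marginal $\beta$ by $\mathcal{C}^\beta(t^* )$. ''With constant probability'' means with probability at least any fixed constant less than $1$; $\tilde O$ suppresses constant factors and factors logarithmic in $N,d,k,1/\epsilon$ and the failure probability. *)

From HB Require Import structures.
From mathcomp Require Import all_boot all_order all_algebra.
From mathcomp Require Import all_classical all_reals all_analysis.
Set Implicit Arguments. Unset Strict Implicit. Unset Printing Implicit Defensive.
Import Order.TTheory GRing.Theory Num.Theory.
Local Open Scope ring_scope.

Definition bits (d : nat) := {ffun 'I_d -> bool}.

Definition band (d : nat) (a b : bits d) : bits d := [ffun i => a i && b i].

Definition nones (d : nat) (b : bits d) : nat := #|[set i | b i]|.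

Definition marginal (R : realType) (d : nat) (beta : bits d) (v : bits d -> R)
  (g : bits d) : R := \sum_(eta : bits d | band eta beta == g) v eta.

Definition marg_dist (R : realType) (d : nat) (beta : bits d) (u v : bits d -> R) : R :=
  \sum_(g : bits d | band g beta == g) `|marginal beta u g - marginal beta v g|.

Definition pop_dist (R : realType) (N d : nat) (j : 'I_N -> bits d) : bits d -> R :=
  fun eta => #|[set i | j i == eta]|%:R / N%:R.

Definition ps (R : realType) (d : nat) (eps : R) : R :=
  (1 + ((2:R) ^+ d - 1) * expR (- eps))^-1.

(* InpPS per-user randomizer: probability of reporting l on input x *)
Definition inpps_prob (R : realType) (d : nat) (eps : R) (x l : bits d) : R :=
  if l == x then ps d eps else (1 - ps d eps) / ((2:R) ^+ d - 1).

Definition local_dp (R : realType) (In Out : finType) (eps : R) (M : In -> Out -> R) : Prop :=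
  forall (x x' : In) (r : Out), M x r <= expR eps * M x' r.

Definition freq (R : realType) (N d : nat) (l : {ffun 'I_N -> bits d}) (j : bits d) : R :=
  #|[set i | l i == j]|%:R / N%:R.

Definition tstar (R : realType) (N d : nat) (eps : R) (l : {ffun 'I_N -> bits d}) : bits d -> R :=
  fun j => let D := (2:R) ^+ d - 1 in
    (D * freq R l j + ps d eps - 1) / (D * ps d eps + ps d eps - 1).

(* probability (over the independent randomness of the N users) of an event on the
   vector of reports *)
Definition inpps_event_prob (R : realType) (N d : nat) (eps : R) (j : 'I_N -> bits d)
  (E : pred {ffun 'I_N -> bits d}) : R :=
  \sum_(l : {ffun 'I_N -> bits d} | E l) \prod_(i < N) inpps_prob eps (j i) (l i).

Definition logfac (R : realType) (N d k : nat) (eps delta : R) : R :=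
  1 + ln (N%:R : R) + ln (d.+1%:R : R) + ln (k.+1%:R : R) + ln (1 + eps^-1) + ln (delta^-1).

From HB Require Import structures.
From mathcomp Require Import all_boot all_order all_algebra.
From mathcomp Require Import all_classical all_reals all_analysis.
From mathcomp Require Import ring lra.
Import Order.TTheory GRing.Theory Num.Theory.
Local Open Scope ring_scope.
Set Implicit Arguments. Unset Strict Implicit. Unset Printing Implicit Defensive.

(* The estimate [t*] is affine in the report frequencies, so on every cell [g] of the
   marginal [beta] the error [C^beta(t)[g] - C^beta(t* )[g]] equals [- (K / N) Y_g], where
   [K = D / (D p + p - 1)] and [Y_g] sums over users the centred indicator that the
   user's report falls into [g]: [N] independent terms whose variances, summed over
   the cells, are at most [2 N q], with [q = 1 - p] the flip probability.
   If [N q <= delta], nobody flips with probability [p^N >= 1 - N q], and then the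
   error is at most [2 K q]. Otherwise [eps <= ln (N 2^d / delta)], and the Chernoff
   bound [E exp (t Y_g) <= exp (2 t^2 Var Y_g)] for [|t| <= 1/2], with a union bound
   over the [2^k] cells, gives [sum_g |Y_g| <= 4 lam N q + 2^k ln (2^(k+1) / delta) / lam]
   with probability [1 - delta]; optimising [lam] yields the [sqrt (2^k N q)] rate.
   Privacy holds because every report has probability between [e^-eps p] and [p]. *)

Section RealInequalities.
Variable R : realType.
Implicit Types x y q a b : R.

Lemma expR_le_quadratic y : y <= 1/2 -> expR y <= 1 + y + 2 * y ^+ 2.
Proof.
move=> y_le.
have expRNy : 1 - y <= expR (- y) by have := expR_ge1Dx (- y).
have expRyNy : expR y * expR (- y) = 1 by rewrite -expRD subrr expR0.
have expRy_gt0 := expR_gt0 y.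
have : 1 <= (1 + y + 2 * y ^+ 2) * (1 - y).
  have : 0 <= y ^+ 2 * (1 - 2 * y) by apply: mulr_ge0; [exact: sqr_ge0 | lra].
  nra.
nra.
Qed.

Lemma bernoulli_ineq q n : 0 <= q <= 1 -> 1 - n%:R * q <= (1 - q) ^+ n.
Proof.
move=> /andP[q_ge0 q_le1]; elim: n => [|n IHn]; first by rewrite mul0r subr0 expr0.
rewrite exprSr -addn1 natrD.
have := ler_wpM2r (_ : 0 <= 1 - q) IHn.
have : 0 <= n%:R * (q * q) by rewrite mulr_ge0 ?mulr_ge0.
lra.
Qed.

Lemma mulDx_expRN_le1 x : (1 + x) * expR (- x) <= 1.
Proof.
have : (1 + x) * expR (- x) <= expR x * expR (- x).
  by rewrite ler_wpM2r ?expR_ge1Dx // ltW ?expR_gt0.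
by rewrite -expRD subrr expR0.
Qed.

Lemma expRN_mul_sqr_le x : 0 <= x -> expR (- x) * x ^+ 2 <= 4 * (1 - expR (- x)) ^+ 2.
Proof.
move=> x_ge0.
set w := expR (- (x / 2)).
have w_gt0 : 0 < w := expR_gt0 _.
have expRNx : expR (- x) = w * w by rewrite -expRD; congr expR; field.
have xw_ge0 : 0 <= x / 2 * w by apply: mulr_ge0; lra.
have xw_le : x / 2 * w <= 1 - w * w.
  have := mulDx_expRN_le1 (x / 2); rewrite -/w => le1.
  have w_le1 : w <= 1 by nra.
  nra.
rewrite expRNx.
have : (x / 2 * w) ^+ 2 <= (1 - w * w) ^+ 2 by rewrite ler_sqr ?nnegrE //; lra.
lra.
Qed.

Lemma tradeoff_bound a b : 0 <= a -> 0 < b ->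
  exists2 lam, 0 < lam <= 1/2 & 4 * (lam * a + b / lam) ^+ 2 <= 25 * (b * (a + b)).
Proof.
move=> a_ge0 b_gt0.
set s := Num.sqrt (b / (a + b)).
have s_gt0 : 0 < s by rewrite sqrtr_gt0 divr_gt0 //; lra.
have s_le1 : s <= 1 by rewrite -sqrtr1 ler_sqrt // ler_pdivrMr; lra.
have s2 : s ^+ 2 * (a + b) = b by rewrite sqr_sqrtr ?divfK //; [lra | rewrite divr_ge0 //; lra].
exists (s / 2); first by apply/andP; split; lra.
set S := _ + _.
have Ss : S * s = s ^+ 2 * a / 2 + 2 * b by rewrite /S; field; lra.
have S_ge0 : 0 <= S.
  by rewrite /S; apply: addr_ge0; [apply: mulr_ge0 | apply: divr_ge0]; lra.
have Ss_le : (S * s) ^+ 2 <= (5 / 2 * b) ^+ 2.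
  have : s ^+ 2 * a <= b by rewrite -s2 ler_wpM2l ?sqr_ge0 //; lra.
  rewrite ler_sqr ?nnegrE; [rewrite Ss; lra | exact: mulr_ge0 S_ge0 (ltW s_gt0) | lra].
have e : 4 * S ^+ 2 * (s ^+ 2 * (a + b)) = 4 * (S * s) ^+ 2 * (a + b) by ring.
rewrite s2 in e; rewrite -(ler_pM2r b_gt0) e.
have := ler_wpM2r (_ : 0 <= a + b) Ss_le.
lra.
Qed.

Lemma sum_absdev_dirac (G : finType) (A : pred G) (nu : G -> R) (c : G) :
  (forall g, 0 <= nu g) -> \sum_(g | A g) nu g = 1 -> A c ->
  \sum_(g | A g) `|(c == g)%:R - nu g| = 2 * (1 - nu c).
Proof.
move=> nu_ge0 nu_sum1 Ac.
have nu_rest : \sum_(g | A g && (g != c)) nu g = 1 - nu c.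
  by rewrite -nu_sum1 [in RHS](bigD1 c) //= addrAC subrr add0r.
have nu_c_le1 : 0 <= 1 - nu c by rewrite -nu_rest sumr_ge0.
rewrite (bigD1 c) //= eqxx.
under eq_bigr => g /andP[_ gc] do rewrite eq_sym (negbTE gc) sub0r normrN ger0_norm //.
rewrite nu_rest ger0_norm // -[true%:R]/(1 : R); lra.
Qed.

Lemma var_le_absdev (c : bool) x : 0 <= x <= 1 -> x * (1 - x) <= `|c%:R - x|.
Proof. by case: c => /andP[? ?]; rewrite ?sub0r ?normrN ger0_norm /=; nra. Qed.

Lemma ln_mul_div x y z : 0 < x -> 0 < y -> 0 < z ->
  ln (x * y / z) = ln x + ln y + ln z^-1.
Proof.
by move=> x_gt0 y_gt0 z_gt0; rewrite !lnM ?posrE ?mulr_gt0 ?invr_gt0.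
Qed.

Lemma ln_bound_ge1 (N : nat) delta y : (0 < N)%N -> 0 < delta < 1 ->
  1 + ln (N%:R : R) + ln delta^-1 <= y -> 1 <= y.
Proof.
move=> N_gt0 /andP[delta_gt0 delta_lt1].
have : 0 <= ln (N%:R : R) by rewrite ln_ge0 // ler1n.
have : 0 <= ln delta^-1 by rewrite ln_ge0 // invf_ge1 // ltW.
lra.
Qed.

Lemma sqrt_pow_ge1 (n k : nat) : 1 <= Num.sqrt ((n.+1)%:R ^+ k : R).
Proof. by rewrite -[X in X <= _]sqrtr1 ler_sqrt ?exprn_ge0 ?exprn_ege1 ?ler1n. Qed.

End RealInequalities.

Lemma natr_card_fiber (R : realType) (T G : finType) (f : T -> G) (g : G) :
  (#|[set i | f i == g]|%:R : R) = \sum_i (f i == g)%:R.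
Proof.
rewrite -natr_sum cardsE -sum1_card big_mkcond /=.
by congr (_%:R); apply: eq_bigr => i _; rewrite inE; case: (f i == g).
Qed.

Lemma sum_fiber_ind (R : realType) (T G : finType) (f : T -> G) (x : T) (g : G) :
  \sum_(e | f e == g) ((x == e)%:R : R) = (f x == g)%:R.
Proof.
rewrite big_mkcond /= (bigD1 x) //= eqxx big1 => [|e ex].
  by case: (f x == g); rewrite addr0.
by rewrite (eq_sym x e) (negbTE ex); case: ifP.
Qed.

Lemma sum_le_union_bound (R : realType) (S G : finType) (w : S -> R) (A : pred G)
    (E : pred S) (bad : G -> pred S) :
  (forall l, 0 <= w l) -> (forall l, (forall g, A g -> ~~ bad g l) -> E l) ->
  \sum_(l | ~~ E l) w l <= \sum_(g | A g) \sum_(l | bad g l) w l.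
Proof.
move=> w_ge0 good.
rewrite (exchange_big_dep predT) //= [X in _ <= X](bigID E) /= -[X in X <= _]add0r.
apply: lerD; first by apply: sumr_ge0 => l _; exact: sumr_ge0.
apply: ler_sum => l notE.
have /existsP[g Ag_bad] : [exists g, A g && bad g l].
  apply: contraNT notE => /existsPn none; apply: good => g Ag.
  by have := none g; rewrite Ag.
by rewrite (bigD1 g) //= lerDl sumr_ge0.
Qed.

Section IndependentIndicators.
Variables (R : realType) (I T : finType) (mu : I -> T -> R).
Hypothesis mu_ge0 : forall i o, 0 <= mu i o.
Hypothesis mu_sum1 : forall i, \sum_o mu i o = 1.

Definition prod_weight (l : {ffun I -> T}) : R := \prod_i mu i (l i).

Lemma prod_weight_ge0 l : 0 <= prod_weight l.
Proof. exact: prodr_ge0. Qed.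

Lemma sum_prod_weightM (F : I -> T -> R) :
  \sum_l prod_weight l * \prod_i F i (l i) = \prod_i \sum_o mu i o * F i o.
Proof. by rewrite bigA_distr_bigA; apply: eq_bigr => l _; rewrite -big_split. Qed.

Lemma sum_prod_weight : \sum_l prod_weight l = 1.
Proof.
transitivity (\prod_i \sum_o mu i o * 1).
  by rewrite -sum_prod_weightM; apply: eq_bigr => l _; rewrite big1_eq mulr1.
by rewrite big1 // => i _; under eq_bigr do rewrite mulr1.
Qed.

Lemma sum_prod_weight_predC (E : pred {ffun I -> T}) :
  \sum_(l | E l) prod_weight l = 1 - \sum_(l | ~~ E l) prod_weight l.
Proof. by rewrite -sum_prod_weight [in RHS](bigID E) /= addrK. Qed.

Variable b : I -> pred T.

Definition ind_mean i : R := \sum_o mu i o * (b i o)%:R.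
Definition ind_dev (l : {ffun I -> T}) : R := \sum_i ((b i (l i))%:R - ind_mean i).
Definition ind_var : R := \sum_i ind_mean i * (1 - ind_mean i).

Lemma ind_mean_ge0 i : 0 <= ind_mean i.
Proof. by apply: sumr_ge0 => o _; rewrite mulr_ge0. Qed.

Lemma ind_mean_le1 i : ind_mean i <= 1.
Proof.
rewrite -(mu_sum1 i); apply: ler_sum => o _.
by rewrite ler_piMr //; case: (b i o).
Qed.

Lemma ind_mgf_le i t : -(1/2) <= t <= 1/2 ->
  \sum_o mu i o * expR (t * ((b i o)%:R - ind_mean i))
    <= expR (2 * t ^+ 2 * (ind_mean i * (1 - ind_mean i))).
Proof.
move=> /andP[t_ge t_le].
set P := ind_mean i.
have P_ge0 : 0 <= P := ind_mean_ge0 i.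
have P_le1 : P <= 1 := ind_mean_le1 i.
apply: le_trans (expR_ge1Dx _).
(* for a {0,1}-valued x, (x - P)^2 = x (1 - 2 P) + P^2 *)
apply: (@le_trans _ _ (\sum_o (mu i o * (1 - t * P + 2 * t ^+ 2 * P ^+ 2)
    + mu i o * (b i o)%:R * (t + 2 * t ^+ 2 * (1 - 2 * P))))).
  apply: ler_sum => o _.
  have dev_le : t * ((b i o)%:R - P) <= 1/2.
    by case: (b i o); rewrite -?[true%:R]/(1 : R) -?[false%:R]/(0 : R); nra.
  apply: le_trans (ler_wpM2l (mu_ge0 i o) (expR_le_quadratic dev_le)) _.
  by case: (b i o); rewrite -?[true%:R]/(1 : R) -?[false%:R]/(0 : R); lra.
rewrite big_split /= -!mulr_suml mu_sum1 -/(ind_mean i) -/P; lra.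
Qed.

Lemma ind_dev_mgf_le t : -(1/2) <= t <= 1/2 ->
  \sum_l prod_weight l * expR (t * ind_dev l) <= expR (2 * t ^+ 2 * ind_var).
Proof.
move=> t_small.
under eq_bigr do rewrite /ind_dev mulr_sumr expR_sum.
rewrite (sum_prod_weightM (fun i o => expR (t * ((b i o)%:R - ind_mean i)))).
rewrite /ind_var mulr_sumr expR_sum.
apply: ler_prod => i _; rewrite ind_mgf_le // andbT.
by apply: sumr_ge0 => o _; rewrite mulr_ge0 ?expR_ge0.
Qed.

Lemma ind_dev_tail lam ell : 0 < lam <= 1/2 ->
  \sum_(l | 2 * lam * ind_var + ell / lam < `|ind_dev l|) prod_weight l
    <= 2 * expR (- ell).
Proof.
move=> /andP[lam_gt0 lam_le].
set s := 2 * lam * ind_var + ell / lam.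
pose bound l := expR (lam * ind_dev l - lam * s) + expR (- lam * ind_dev l - lam * s).
have bound_ge1 l : s < `|ind_dev l| -> 1 <= bound l.
  move=> s_lt; rewrite /bound.
  have ge1 (y : R) : 0 <= y -> 1 <= expR y by move=> ?; rewrite -expR0 ler_expR.
  case: (lerP 0 (ind_dev l)) => dev_sign; [rewrite ger0_norm // in s_lt |
    rewrite ltr0_norm // in s_lt].
    have := ge1 (lam * ind_dev l - lam * s); have := expR_ge0 (- lam * ind_dev l - lam * s).
    nra.
  have := ge1 (- lam * ind_dev l - lam * s); have := expR_ge0 (lam * ind_dev l - lam * s).
  nra.
apply: (@le_trans _ _ (\sum_l prod_weight l * bound l)).
  rewrite [X in _ <= X](bigID (fun l => s < `|ind_dev l|)) /= -[X in X <= _]addr0.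
  apply: lerD; last first.
    by apply: sumr_ge0 => l _; rewrite mulr_ge0 ?prod_weight_ge0 ?addr_ge0 ?expR_ge0.
  apply: ler_sum => l /bound_ge1 ge1.
  by rewrite -{1}[prod_weight l]mulr1 ler_wpM2l ?prod_weight_ge0.
(* the threshold [s] is chosen so that [lam * s = 2 lam^2 ind_var + ell] *)
have lam_s : lam * s = 2 * lam ^+ 2 * ind_var + ell by rewrite /s; field; lra.
under eq_bigr do rewrite /bound !expRD mulrDr !mulrA.
rewrite big_split /= -!mulr_suml.
have expR_ell : expR (2 * lam ^+ 2 * ind_var) * expR (- (lam * s)) = expR (- ell).
  by rewrite -expRD lam_s; congr expR; ring.
have mgf_pos : -(1/2) <= lam <= 1/2 by apply/andP; split; lra.
have mgf_neg : -(1/2) <= - lam <= 1/2 by apply/andP; split; lra.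
have := ler_wpM2r (expR_ge0 (- (lam * s))) (ind_dev_mgf_le mgf_pos).
have := ler_wpM2r (expR_ge0 (- (lam * s))) (ind_dev_mgf_le mgf_neg).
rewrite sqrrN expR_ell; lra.
Qed.

End IndependentIndicators.

Section InpPS.
Variables (R : realType) (d : nat) (eps : R).
Hypothesis eps_gt0 : 0 < eps.

Local Notation m := ((2 : R) ^+ d).
Local Notation D := ((2 : R) ^+ d - 1).
Local Notation u := (expR (- eps)).
Local Notation p := (ps d eps).
Local Notation q := (1 - ps d eps).
(* [K = D / (D p + p - 1)] is the factor by which the aggregator rescales frequencies *)
Local Notation K := ((ps d eps * (1 - expR (- eps)))^-1).

Lemma pow2B1_ge0 : 0 <= D.
Proof. by rewrite subr_ge0 exprn_ege1 // ler1n. Qed.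

Lemma expRN_lt1 : u < 1.
Proof. by rewrite expR_lt1 oppr_lt0. Qed.

Lemma ps_mulV : p * (1 + D * u) = 1.
Proof.
rewrite /ps mulVf // gt_eqF // ltr_pwDl // mulr_ge0 ?expR_ge0 //.
exact: pow2B1_ge0.
Qed.

Lemma ps_gt0 : 0 < p.
Proof.
rewrite /ps invr_gt0 ltr_pwDl // mulr_ge0 ?expR_ge0 //; exact: pow2B1_ge0.
Qed.

Lemma one_minus_ps : q = D * u * p.
Proof. by have := ps_mulV; lra. Qed.

Lemma pow2B1_ge1 : (0 < d)%N -> 1 <= D.
Proof.
move=> d_gt0.
by rewrite lerBrDr (_ : 1 + 1 = 2%:R) // -natrX ler_nat -[2%N]expn1 leq_pexp2l.
Qed.

Lemma one_minus_ps_ge0 : 0 <= q.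
Proof. by rewrite one_minus_ps !mulr_ge0 ?expR_ge0 ?pow2B1_ge0 ?ltW ?ps_gt0. Qed.

Lemma one_minus_ps_le : q <= m * u.
Proof.
have Du_ge0 : 0 <= D * u by rewrite mulr_ge0 ?expR_ge0 ?pow2B1_ge0.
have p_le1 : p <= 1.
  by have := ps_mulV; have := mulr_ge0 (ltW ps_gt0) Du_ge0; lra.
have := ler_wpM2l Du_ge0 p_le1; have := expR_ge0 (- eps).
rewrite one_minus_ps; lra.
Qed.

Lemma inpps_prob_bounds (x l : bits d) : u * p <= inpps_prob eps x l <= p.
Proof.
have p_gt0 := ps_gt0; have u_lt1 := expRN_lt1; have u_gt0 := expR_gt0 (- eps).
rewrite /inpps_prob; case: eqP => [_ | /eqP lx]; first by apply/andP; split; nra.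
have d_gt0 : (0 < d)%N.
  case: (posnP d) => // d0; case/eqP: lx; apply/ffunP => i.
  by exfalso; have := leq_ltn_trans (leq0n i) (ltn_ord i); rewrite d0.
have D_gt0 : 0 < D by have := pow2B1_ge1 d_gt0; lra.
by rewrite one_minus_ps -mulrA [D * _]mulrC mulfK ?gt_eqF //; apply/andP; split; nra.
Qed.

Lemma inpps_local_dp : local_dp eps (@inpps_prob R d eps).
Proof.
move=> x x' r.
have /andP[_ le_p] := inpps_prob_bounds x r.
have /andP[ge_up _] := inpps_prob_bounds x' r.
apply: le_trans le_p (le_trans _ (ler_wpM2l (expR_ge0 _) ge_up)).
by rewrite mulrA -expRD subrr expR0 mul1r.
Qed.

Lemma inpps_prob_ge0 (x l : bits d) : 0 <= inpps_prob eps x l.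
Proof.
have /andP[+ _] := inpps_prob_bounds x l.
by apply: le_trans; rewrite mulr_ge0 ?expR_ge0 ?ltW ?ps_gt0.
Qed.

Lemma gainE : K = (1 + D * u) / (1 - u).
Proof. by rewrite invfM /ps invrK mulrC. Qed.

Lemma gain_gt0 : 0 < K.
Proof.
rewrite invr_gt0 mulr_gt0 ?ps_gt0 // subr_gt0; exact: expRN_lt1.
Qed.

Lemma gain_sqr_le : K ^+ 2 * q * eps ^+ 2 <= 4 * m ^+ 2.
Proof.
have u_gt0 := expR_gt0 (- eps); have u_lt1 := expRN_lt1; have D_ge0 := pow2B1_ge0.
have v_gt0 : 0 < 1 + D * u by rewrite ltr_pwDl // mulr_ge0 // ltW.
have qE : q = D * u / (1 + D * u) by rewrite one_minus_ps /ps.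
have -> : K ^+ 2 * q * eps ^+ 2 = D * (1 + D * u) * (u * eps ^+ 2 / (1 - u) ^+ 2).
  by rewrite gainE qE; field; rewrite !gt_eqF ?subr_gt0.
have : u * eps ^+ 2 / (1 - u) ^+ 2 <= 4.
  by rewrite ler_pdivrMr ?exprn_gt0 ?subr_gt0 // expRN_mul_sqr_le // ltW.
have : 0 <= u * eps ^+ 2 / (1 - u) ^+ 2.
  by apply: divr_ge0; [apply: mulr_ge0; [exact: ltW | exact: sqr_ge0] | exact: sqr_ge0].
have : D * (1 + D * u) <= m ^+ 2.
  have : 0 <= D * D * (1 - u) by rewrite !mulr_ge0 // subr_ge0 ltW.
  nra.
have : 0 <= D * (1 + D * u) by nra.
nra.
Qed.

Lemma gain_mul_eps_le : K * eps <= m * (1 + eps).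
Proof.
have u_gt0 := expR_gt0 (- eps); have u_lt1 := expRN_lt1; have D_ge0 := pow2B1_ge0.
have eps_le : eps / (1 - u) <= 1 + eps.
  by rewrite ler_pdivrMr ?subr_gt0 //; have := mulDx_expRN_le1 eps; lra.
rewrite gainE -mulrA [_^-1 * eps]mulrC.
have Du_ge0 : 0 <= D * u by rewrite mulr_ge0 // ltW.
apply: ler_pM => //; [lra | by rewrite divr_ge0 ?subr_ge0 // ltW | nra].
Qed.

Hypothesis d_gt0 : (0 < d)%N.

Lemma inpps_probE (x l : bits d) : inpps_prob eps x l = if l == x then p else u * p.
Proof.
rewrite /inpps_prob; case: eqP => // _.
rewrite one_minus_ps -mulrA [D * _]mulrC mulfK // gt_eqF //.
exact: lt_le_trans ltr01 (pow2B1_ge1 d_gt0).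
Qed.

Lemma inpps_prob_sum1 (x : bits d) : \sum_l inpps_prob eps x l = 1.
Proof.
rewrite (bigD1 x) //= inpps_probE eqxx.
under eq_bigr => l lx do rewrite inpps_probE (negbTE lx).
rewrite sumr_const cardC1 card_ffun card_bool card_ord -mulr_natl.
rewrite -subn1 natrB ?expn_gt0 // natrX.
by have := ps_mulV; lra.
Qed.

Section Estimator.
Variables (N : nat) (j : 'I_N -> bits d) (beta : bits d).
Hypothesis N_gt0 : (0 < N)%N.

Local Notation mu := (fun i : 'I_N => inpps_prob eps (j i)).
(* the cells of the marginal are the [g] with [g /\ beta = g];
   report [o] lies in cell [o /\ beta] *)
Local Notation cell g := (fun (_ : 'I_N) (o : bits d) => band o beta == g).
Local Notation is_cell g := (band g beta == g).

Let mu_ge0 i o : 0 <= mu i o := inpps_prob_ge0 (j i) o.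
Let mu_sum1 i : \sum_o mu i o = 1 := inpps_prob_sum1 (j i).

Lemma inpps_event_probE (E : pred {ffun 'I_N -> bits d}) :
  inpps_event_prob eps j E = \sum_(l | E l) prod_weight mu l.
Proof. by []. Qed.

Lemma tstar_error (l : {ffun 'I_N -> bits d}) (e : bits d) :
  pop_dist R j e - tstar eps l e
    = - (K / N%:R) * \sum_i ((l i == e)%:R - inpps_prob eps (j i) e).
Proof.
have u_lt1 := expRN_lt1; have p_gt0 := ps_gt0; have D_ge1 := pow2B1_ge1 d_gt0.
set den := D * p + p - 1.
have denE : den = D * p * (1 - u) by rewrite /den; have := one_minus_ps; lra.
have den_gt0 : 0 < den by rewrite denE !mulr_gt0 // ?subr_gt0 //; lra.
have KE : K = D / den by rewrite denE; field; rewrite ?gt_eqF ?subr_gt0 //; lra.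
(* a user with input [x] reports [e] with probability [((e == x) den + q) / D] *)
have sum_prob : \sum_i inpps_prob eps (j i) e
    = ((\sum_i (j i == e)%:R) * den + N%:R * q) / D.
  have -> : N%:R * q = \sum_(i < N) q by rewrite sumr_const card_ord mulr_natl.
  rewrite mulr_suml -big_split /= mulr_suml.
  apply: eq_bigr => i _; rewrite inpps_probE // eq_sym.
  case: (j i == e); rewrite -?[true%:R]/(1 : R) -?[false%:R]/(0 : R) /den.
    by field; lra.
  by rewrite one_minus_ps; field; lra.
rewrite /pop_dist /tstar /freq -/den !natr_card_fiber sumrB sum_prob KE.
by field; rewrite !gt_eqF // ?ltr0n //; lra.
Qed.

Lemma cell_meanE g i :
  ind_mean mu (cell g) i = \sum_(o | band o beta == g) inpps_prob eps (j i) o.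
Proof.
rewrite /ind_mean [RHS]big_mkcond /=; apply: eq_bigr => o _.
by case: (band o beta == g); rewrite ?mulr1 ?mulr0.
Qed.

Lemma marginal_error g l :
  marginal beta (pop_dist R j) g - marginal beta (tstar eps l) g
    = - (K / N%:R) * ind_dev mu (cell g) l.
Proof.
rewrite /marginal -sumrB.
under eq_bigr do rewrite tstar_error.
rewrite -mulr_sumr exchange_big /=; congr (_ * _); apply: eq_bigr => i _.
by rewrite sumrB sum_fiber_ind cell_meanE.
Qed.

Lemma marg_dist_tstar l :
  marg_dist beta (pop_dist R j) (tstar eps l)
    = K / N%:R * \sum_(g | is_cell g) `|ind_dev mu (cell g) l|.
Proof.
rewrite /marg_dist mulr_sumr; apply: eq_bigr => g _.
rewrite marginal_error normrM normrN (@ger0_norm _ (K / N%:R)) //.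
by apply: divr_ge0; [exact: ltW gain_gt0 | exact: ler0n].
Qed.

Lemma band_is_cell (e : bits d) : is_cell (band e beta).
Proof. by apply/eqP/ffunP => i; rewrite !ffunE -andbA andbb. Qed.

Lemma card_cells : (#|[pred g : bits d | is_cell g]| <= 2 ^ nones beta)%N.
Proof.
pose support (g : bits d) := [set i | g i].
have support_inj : injective support.
  by move=> g g' /setP eq_gg'; apply/ffunP => i; have := eq_gg' i; rewrite !inE.
rewrite -(card_imset _ support_inj) /nones -card_powerset; apply: subset_leq_card.
apply/fintype.subsetP => A /imsetP[g]; rewrite inE => /eqP cell_g ->.
rewrite inE; apply/fintype.subsetP => i; rewrite !inE -cell_g ffunE.
by case/andP.
Qed.

Lemma sum_cell_mean i : \sum_(g | is_cell g) ind_mean mu (cell g) i = 1.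
Proof.
rewrite -(mu_sum1 i).
rewrite [RHS](partition_big (fun e : bits d => band e beta) (fun g => is_cell g)) /=.
  by apply: eq_bigr => g _; rewrite cell_meanE.
by move=> e _; exact: band_is_cell.
Qed.

Lemma own_cell_mean_ge i : p <= ind_mean mu (cell (band (j i) beta)) i.
Proof.
rewrite cell_meanE (bigD1 (j i)) //= inpps_probE // eqxx lerDl.
by apply: sumr_ge0 => e _; exact: inpps_prob_ge0.
Qed.

Lemma sum_cell_absdev_le i :
  \sum_(g | is_cell g) `|(band (j i) beta == g)%:R - ind_mean mu (cell g) i| <= 2 * q.
Proof.
rewrite sum_absdev_dirac ?sum_cell_mean ?band_is_cell //.
  by have := own_cell_mean_ge i; lra.
by move=> g; exact: ind_mean_ge0.
Qed.

Lemma sum_const_2q : 2 * N%:R * q = \sum_(i < N) 2 * q.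
Proof. by rewrite sumr_const card_ord -mulr_natr; ring. Qed.

Lemma noflip_err_le :
  \sum_(g | is_cell g) `|ind_dev mu (cell g) [ffun i => j i]| <= 2 * N%:R * q.
Proof.
apply: (@le_trans _ _ (\sum_(g | is_cell g) \sum_i
    `|(band (j i) beta == g)%:R - ind_mean mu (cell g) i|)).
  apply: ler_sum => g _; apply: le_trans (ler_norm_sum _ _ _) _.
  by under eq_bigr do rewrite ffunE.
rewrite exchange_big /= sum_const_2q.
by apply: ler_sum => i _; exact: sum_cell_absdev_le.
Qed.

Lemma sum_cell_var_le : \sum_(g | is_cell g) ind_var mu (cell g) <= 2 * N%:R * q.
Proof.
rewrite /ind_var exchange_big /= sum_const_2q.
apply: ler_sum => i _; apply: le_trans (sum_cell_absdev_le i).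
by apply: ler_sum => g _; rewrite var_le_absdev // ind_mean_ge0 ?ind_mean_le1.
Qed.

Lemma inpps_noflip T delta : N%:R * q <= delta -> 2 * K * q <= T ->
  1 - delta <= inpps_event_prob eps j
    (fun l => marg_dist beta (pop_dist R j) (tstar eps l) <= T).
Proof.
move=> Nq_le errT.
have q_ge0 := one_minus_ps_ge0.
have N_neq0 : N%:R != 0 :> R by rewrite pnatr_eq0 -lt0n.
set honest := [ffun i => j i].
have honest_good : marg_dist beta (pop_dist R j) (tstar eps honest) <= T.
  rewrite marg_dist_tstar; apply: le_trans errT.
  have scale (k : R) : 2 * k * q = k / N%:R * (2 * N%:R * q) by field.
  rewrite scale.
  by rewrite ler_wpM2l ?noflip_err_le // divr_ge0 ?ler0n // ltW ?gain_gt0.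
have honest_weight : prod_weight mu honest = p ^+ N.
  rewrite /prod_weight; under eq_bigr do rewrite ffunE inpps_probE // eqxx.
  by rewrite prodr_const card_ord.
rewrite inpps_event_probE (bigD1 honest) //= honest_weight.
have : 1 - N%:R * q <= p ^+ N.
  have := @bernoulli_ineq R q N; rewrite subKr; apply.
  by rewrite q_ge0 lerBlDr lerDl ltW ?ps_gt0.
have : 0 <= \sum_(l | (marg_dist beta (pop_dist R j) (tstar eps l) <= T) && (l != honest))
    prod_weight mu l by apply: sumr_ge0 => l _; exact: prod_weight_ge0.
lra.
Qed.

Lemma sum_cells_const_le (c : R) : 0 <= c ->
  \sum_(g | is_cell g) c <= c * 2 ^+ nones beta.
Proof.
move=> c_ge0; rewrite sumr_const -[c *+ _]mulr_natr ler_wpM2l //.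
by rewrite -natrX ler_nat card_cells.
Qed.

Lemma inpps_concentration lam ell T delta : 0 < lam <= 1/2 -> 0 <= ell ->
  2 * 2 ^+ nones beta * expR (- ell) <= delta ->
  K / N%:R * (4 * lam * N%:R * q + 2 ^+ nones beta * ell / lam) <= T ->
  1 - delta <= inpps_event_prob eps j
    (fun l => marg_dist beta (pop_dist R j) (tstar eps l) <= T).
Proof.
move=> lam_range ell_ge0 delta_ge errT.
have /andP[lam_gt0 _] := lam_range.
rewrite inpps_event_probE (sum_prod_weight_predC mu_sum1) lerD2l lerN2.
pose s g := 2 * lam * ind_var mu (cell g) + ell / lam.
apply: le_trans (sum_le_union_bound (A := fun g => is_cell g)
  (bad := fun g l => s g < `|ind_dev mu (cell g) l|) _ _) _.
- exact: prod_weight_ge0.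
- move=> l good; rewrite marg_dist_tstar; apply: le_trans errT.
  apply: ler_wpM2l; first by rewrite divr_ge0 ?ler0n // ltW ?gain_gt0.
  apply: le_trans (_ : \sum_(g | is_cell g) s g <= _).
    by apply: ler_sum => g /good; rewrite -leNgt.
  rewrite big_split -mulr_sumr.
  apply: lerD; first by have := ler_wpM2l (ltW lam_gt0) sum_cell_var_le; lra.
  have ell_lam_ge0 : 0 <= ell / lam by apply: divr_ge0 => //; exact: ltW.
  by apply: le_trans (sum_cells_const_le ell_lam_ge0) _; rewrite mulrC mulrA.
- apply: le_trans (_ : \sum_(g | is_cell g) 2 * expR (- ell) <= _).
    by apply: ler_sum => g _; exact: ind_dev_tail.
  have tail_ge0 : 0 <= 2 * expR (- ell) by apply: mulr_ge0; rewrite ?expR_ge0.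
  apply: le_trans (sum_cells_const_le tail_ge0) (le_trans _ delta_ge).
  by rewrite mulrAC.
Qed.

Section Regimes.
Variables (L delta : R).
Hypothesis delta_range : 0 < delta < 1.
Hypothesis m_le_N : m <= N%:R.
Hypothesis L_ge : 1 + ln (N%:R : R) + ln delta^-1 <= L.

Local Notation s := (Num.sqrt (N%:R : R)).
Local Notation r := (Num.sqrt ((2 : R) ^+ nones beta)).
Local Notation err_bound := (15 * L ^+ 2 * (m * r) / (eps * s)).

Lemma noflip_regime : N%:R * q <= delta ->
  1 - delta <= inpps_event_prob eps j
    (fun l => marg_dist beta (pop_dist R j) (tstar eps l) <= err_bound).
Proof.
move=> Nq_le; apply: inpps_noflip => //.
have s_gt0 : 0 < s by rewrite sqrtr_gt0 ltr0n.
have Kq_ge0 : 0 <= K * q * eps * s.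
  by rewrite !mulr_ge0 ?one_minus_ps_ge0 ?ltW ?gain_gt0.
have m2_ge0 : 0 <= 2 * m by rewrite mulr_ge0 ?exprn_ge0.
have Kqes_le : K * q * eps * s <= 2 * m.
  rewrite -ler_sqr ?nnegrE //.
  have -> : (K * q * eps * s) ^+ 2 = K ^+ 2 * q * eps ^+ 2 * (s ^+ 2 * q) by ring.
  rewrite sqr_sqrtr ?ler0n //.
  have A_ge0 : 0 <= K ^+ 2 * q * eps ^+ 2.
    by rewrite mulr_ge0 ?sqr_ge0 // mulr_ge0 ?sqr_ge0 ?one_minus_ps_ge0.
  have Nq_le1 : N%:R * q <= 1 by case/andP: delta_range; lra.
  have := ler_wpM2l A_ge0 Nq_le1; have := gain_sqr_le; lra.
rewrite ler_pdivlMr ?mulr_gt0 //.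
have : 1 <= L ^+ 2 * r.
  by rewrite mulr_ege1 ?exprn_ege1 ?sqrt_pow_ge1 ?(ln_bound_ge1 N_gt0 delta_range L_ge).
have : 0 <= m by rewrite exprn_ge0.
nra.
Qed.

Lemma flip_variance_le ell : 0 < ell <= L -> 1 + eps <= 2 * L ->
  2 ^+ nones beta <= N%:R :> R ->
  K ^+ 2 * eps ^+ 2 / N%:R * (2 ^+ nones beta * ell * (4 * N%:R * q + 2 ^+ nones beta * ell))
    <= 20 * m ^+ 2 * 2 ^+ nones beta * L ^+ 4.
Proof.
move=> /andP[ell_gt0 ell_le] eps_le k_le.
have L_ge1 := ln_bound_ge1 N_gt0 delta_range L_ge.
have q_ge0 := one_minus_ps_ge0.
have Nr_gt0 : 0 < N%:R :> R by rewrite ltr0n.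
have m_ge0 : 0 <= m by rewrite exprn_ge0.
move: gain_gt0 gain_sqr_le gain_mul_eps_le.
set k := (ps d eps * (1 - expR (- eps)))^-1 => k_gt0 gain_sqr gain_eps.
set k2 := (2 : R) ^+ nones beta in k_le *.
have k2_ge0 : 0 <= k2 by rewrite exprn_ge0.
have -> : k ^+ 2 * eps ^+ 2 / N%:R * (k2 * ell * (4 * N%:R * q + k2 * ell))
    = 4 * k2 * ell * (k ^+ 2 * q * eps ^+ 2) + (k * eps) ^+ 2 * ((k2 * ell) ^+ 2 / N%:R).
  by field; rewrite gt_eqF.
have L_le4 : L <= L ^+ 4.
  have : 1 <= L ^+ 3 by rewrite exprn_ege1.
  rewrite exprS; nra.
have first_le : 4 * k2 * ell * (k ^+ 2 * q * eps ^+ 2) <= 16 * m ^+ 2 * k2 * L ^+ 4.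
  have A_ge0 : 0 <= k ^+ 2 * q * eps ^+ 2.
    by apply: mulr_ge0; [apply: mulr_ge0 => //; exact: sqr_ge0 | exact: sqr_ge0].
  have : ell * (k ^+ 2 * q * eps ^+ 2) <= L ^+ 4 * (4 * m ^+ 2).
    by apply: ler_pM => //; [exact: ltW | lra].
  by move/(ler_wpM2l k2_ge0); lra.
have second_le : (k * eps) ^+ 2 * ((k2 * ell) ^+ 2 / N%:R) <= 4 * m ^+ 2 * k2 * L ^+ 4.
  have Keps_le : (k * eps) ^+ 2 <= (2 * m * L) ^+ 2.
    have keps_ge0 : 0 <= k * eps by apply: mulr_ge0; exact: ltW.
    have mL_ge0 : 0 <= 2 * m * L by apply: mulr_ge0; [apply: mulr_ge0 |]; lra.
    rewrite ler_sqr ?nnegrE //; apply: le_trans gain_eps _.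
    by have := ler_wpM2l m_ge0 eps_le; lra.
  have kell_le : (k2 * ell) ^+ 2 / N%:R <= k2 * L ^+ 2.
    rewrite ler_pdivrMr //.
    have : (k2 * ell) ^+ 2 <= (k2 * L) ^+ 2 by rewrite ler_sqr ?nnegrE ?mulr_ge0; nra.
    have := ler_wpM2r (mulr_ge0 k2_ge0 (sqr_ge0 L)) k_le; lra.
  have : 0 <= (k2 * ell) ^+ 2 / N%:R by rewrite divr_ge0 ?sqr_ge0 ?ltW.
  have := ler_pM (sqr_ge0 _) _ Keps_le kell_le; lra.
lra.
Qed.

Lemma flip_regime_err_le lam ell : 0 < lam -> 0 < ell <= L -> 1 + eps <= 2 * L ->
  2 ^+ nones beta <= N%:R :> R ->
  4 * (lam * (4 * N%:R * q) + 2 ^+ nones beta * ell / lam) ^+ 2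
    <= 25 * (2 ^+ nones beta * ell * (4 * N%:R * q + 2 ^+ nones beta * ell)) ->
  K / N%:R * (4 * lam * N%:R * q + 2 ^+ nones beta * ell / lam) <= err_bound.
Proof.
move=> lam_gt0 ell_range eps_le k_le tradeoff.
have var_le := flip_variance_le ell_range eps_le k_le.
have /andP[ell_gt0 _] := ell_range.
have L_ge1 := ln_bound_ge1 N_gt0 delta_range L_ge.
have q_ge0 := one_minus_ps_ge0.
have r_ge1 : 1 <= r by exact: sqrt_pow_ge1.
have s_gt0 : 0 < s by rewrite sqrtr_gt0 ltr0n.
have Nr_gt0 : 0 < N%:R :> R by rewrite ltr0n.
move: gain_gt0 var_le; set k := (ps d eps * (1 - expR (- eps)))^-1 => k_gt0 var_le.
have r2 := @sqr_sqrtr _ ((2 : R) ^+ nones beta) (exprn_ge0 _ (ler0n _ 2)).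
set k2 := (2 : R) ^+ nones beta in k_le tradeoff var_le r2 *.
have k2_ge0 : 0 <= k2 by rewrite exprn_ge0.
set X := lam * (4 * N%:R * q) + k2 * ell / lam in tradeoff *.
have -> : 4 * lam * N%:R * q + k2 * ell / lam = X by rewrite /X; ring.
have X_ge0 : 0 <= X.
  by rewrite /X addr_ge0 // ?divr_ge0 ?mulr_ge0 // ?ltW //; lra.
have m_ge0 : 0 <= m by rewrite exprn_ge0.
have lhs_ge0 : 0 <= k / N%:R * X * (eps * s).
  by rewrite !mulr_ge0 ?divr_ge0 ?ler0n // ltW.
have rhs_ge0 : 0 <= 15 * L ^+ 2 * (m * r).
  by apply: mulr_ge0; [apply: mulr_ge0 => //; exact: sqr_ge0 | apply: mulr_ge0; lra].
rewrite ler_pdivlMr ?mulr_gt0 // -ler_sqr ?nnegrE //.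
set c := k ^+ 2 * eps ^+ 2 / N%:R in var_le *.
have c_ge0 : 0 <= c by rewrite divr_ge0 ?mulr_ge0 ?sqr_ge0 ?ltW.
have -> : (k / N%:R * X * (eps * s)) ^+ 2 = c * X ^+ 2.
  by rewrite /c !exprMn sqr_sqrtr ?ler0n //; field; rewrite gt_eqF.
have M_ge0 : 0 <= m ^+ 2 * k2 * L ^+ 4.
  by apply: mulr_ge0; [apply: mulr_ge0 => //; exact: sqr_ge0 | apply: exprn_ge0; lra].
have := ler_wpM2l c_ge0 tradeoff.
rewrite !exprMn r2; lra.
Qed.

Lemma flip_regime : delta < N%:R * q ->
  1 - delta <= inpps_event_prob eps j
    (fun l => marg_dist beta (pop_dist R j) (tstar eps l) <= err_bound).
Proof.
move=> flip.
have /andP[delta_gt0 delta_lt1] := delta_range.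
have ln_N_ge0 : 0 <= ln (N%:R : R) by rewrite ln_ge0 // ler1n.
have ln_delta_ge0 : 0 <= ln delta^-1 by rewrite ln_ge0 // invf_ge1 // ltW.
have Nr_gt0 : 0 < N%:R :> R by rewrite ltr0n.
have m_gt0 : 0 < m by rewrite exprn_gt0.
have k_le_d : (nones beta <= d)%N by rewrite /nones (leq_trans (max_card _)) // card_ord.
have k2_le_N : (2 : R) ^+ nones beta <= N%:R.
  by apply: le_trans m_le_N; rewrite -!natrX ler_nat leq_pexp2l.
have k2_gt0 : 0 < (2 : R) ^+ nones beta by rewrite exprn_gt0.
set ell := ln (2 * 2 ^+ nones beta / delta).
have ell_gt0 : 0 < ell.
  by rewrite ln_gt0 // ltr_pdivlMr // mul1r; have := exprn_ege1 (nones beta) (ler1n R 2); lra.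
have ell_le : ell <= L.
  rewrite /ell ln_mul_div //.
  have : ln (2 : R) <= 1 by have := @le_ln1Dx R 1; rewrite (_ : 1 + 1 = 2 :> R) //; apply.
  have : ln ((2 : R) ^+ nones beta) <= ln (N%:R : R) by rewrite ler_ln ?posrE.
  by have := L_ge; lra.
have delta_eq : 2 * 2 ^+ nones beta * expR (- ell) = delta.
  by rewrite expRN lnK ?posrE ?divr_gt0 ?mulr_gt0 // invf_div mulrC divfK ?gt_eqF ?mulr_gt0.
have eps_le : 1 + eps <= 2 * L.
  have : delta * expR eps < N%:R * m.
    move: (lt_le_trans flip (ler_wpM2l (ler0n _ N) one_minus_ps_le)).
    by rewrite -(ltr_pM2r (expR_gt0 eps)) -!mulrA -expRD addNr expR0 mulr1.
  rewrite -ltr_pdivlMl // mulrC => expR_lt.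
  have : eps < ln (N%:R * m / delta) by rewrite -ltr_expR lnK ?posrE ?divr_gt0 ?mulr_gt0.
  rewrite ln_mul_div //.
  have : ln m <= ln (N%:R : R) by rewrite ler_ln ?posrE.
  by have := L_ge; lra.
have [lam lam_range tradeoff] :=
  tradeoff_bound (mulr_ge0 (mulr_ge0 (ler0n _ 4) (ler0n _ N)) one_minus_ps_ge0)
                 (mulr_gt0 k2_gt0 ell_gt0).
apply: (inpps_concentration lam_range (ltW ell_gt0)); first by rewrite delta_eq.
have /andP[lam_gt0 _] := lam_range.
by apply: flip_regime_err_le => //; rewrite ell_gt0.
Qed.

End Regimes.
End Estimator.
End InpPS.

Lemma logfac_ge (R : realType) (N d k : nat) (eps delta : R) :
  (0 < N)%N -> 0 < eps -> 0 < delta < 1 ->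
  1 + ln (N%:R : R) + ln delta^-1 <= logfac N d k eps delta.
Proof.
move=> N_gt0 eps_gt0 /andP[delta_gt0 delta_lt1].
have : 0 <= ln (d.+1%:R : R) by rewrite ln_ge0 // ler1n.
have : 0 <= ln (k.+1%:R : R) by rewrite ln_ge0 // ler1n.
have : 0 <= ln (1 + eps^-1) by rewrite ln_ge0 // lerDl invr_ge0 ltW.
rewrite /logfac; lra.
Qed.

Theorem theorem3 (R : realType) :
  (forall (d : nat) (eps : R), 0 < eps -> local_dp eps (@inpps_prob R d eps)) /\
  exists (C : R) (c : nat), 0 < C /\
    forall (delta eps : R) (d N k : nat) (beta : bits d) (j : 'I_N -> bits d),
      0 < delta < 1 -> 0 < eps -> (1 <= d)%N -> (0 < N)%N -> nones beta = k ->
      C * @logfac R N d k eps delta ^+ c * (2:R) ^+ d <= N%:R ->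
      1 - delta <=
        inpps_event_prob eps j
          (fun l => marg_dist beta (@pop_dist R N d j) (tstar eps l)
                    <= C * @logfac R N d k eps delta ^+ c
                       * ((2:R) ^+ d * Num.sqrt ((2:R) ^+ k)) / (eps * Num.sqrt (N%:R))).
Proof.
split=> [d eps eps_gt0 | ]; first exact: inpps_local_dp.
exists 15, 2%N; split=> [| delta eps d N k beta j delta_range eps_gt0 d_gt0 N_gt0 <-]; first lra.
have L_ge := logfac_ge d (nones beta) N_gt0 eps_gt0 delta_range.
set L := logfac _ _ _ _ _ in L_ge * => N_large.
have L_ge1 := ln_bound_ge1 N_gt0 delta_range L_ge.
have m_le_N : (2 : R) ^+ d <= N%:R.
  by apply: le_trans N_large; rewrite ler_peMl ?exprn_ge0 //; nra.
have [noflip | flip] := lerP (N%:R * (1 - ps d eps)) delta.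
- exact: noflip_regime.
- exact: flip_regime.
Qed.
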